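(* The continuum $|\mathbb G|$ is hereditarily unicoherent, i.e. the intersection of any two subcontinua of $|\mathbb G|$ is connected.
   Context: A graph is a pair $A=(V(A),E(A))$ with $E(A)\subseteq V(A)^2$ reflexive and symmetric; a topological graph additionally has $V$ compact, second countable, zero-dimensional and $E$ closed. Epimorphisms are (continuous) edge-preserving maps surjective on vertices and edges. A vertex set $S$ is disconnected if it splits into two nonempty closed subsets with no edges between them; otherwise connected; components are maximal connected subsets. An epimorphism $f\colon A\to B$ is confluent if for every connected $Q\subseteq V(B)$ each component $C$ of $f^{-1}(Q)$ has $f(C)=Q$. $\mathbb G$ is the projective Fraïssé limit of the class of finite connected graphs with confluent epimorphisms: the unique topological graph such that (1) every finite connected graph is a confluent epimorphic image of $\mathbb G$; (2) for finite connected $A,B$ and confluent epimorphisms $f\colon\mathbb G\to A$, $g\colon B\to A$ there is a confluent epimorphism $h\colon\mathbb G\to B$ with $f=g\circ h$; (3) for each $\varepsilon>0$ some confluent epimorphism from $\mathbb G$ onto a finite connected graph has all point-preimages of diameter $<\varepsilon$. The edge relation of $\mathbb G$ is an equivalence relation and $|\mathbb G|=V(\mathbb G)/E(\mathbb G)$ is its topological realization. *)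

From HB Require Import structures.
From mathcomp Require Import all_boot all_order all_algebra.
From mathcomp Require Import all_classical all_reals all_analysis.
Set Implicit Arguments. Unset Strict Implicit. Unset Printing Implicit Defensive.
Import Order.TTheory GRing.Theory Num.Theory.
Local Open Scope classical_set_scope.
Local Open Scope ring_scope.

Definition fgraph (A : finType) (eA : rel A) := reflexive eA /\ symmetric eA.

(* S is disconnected iff it splits into two nonempty (closed = arbitrary in the
   discrete finite case) disjoint subsets with no edges between them *)
Definition fconnected (A : finType) (eA : rel A) (S : {set A}) : Prop :=
  ~ exists S1 S2 : {set A},
      [/\ S1 != finset.set0, S2 != finset.set0, S1 :|: S2 = S, S1 :&: S2 = finset.set0 &
          forall x y, x \in S1 -> y \in S2 -> ~~ eA x y].

Definition fcomponent (A : finType) (eA : rel A) (S C : {set A}) : Prop :=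
  [/\ C \subset S, fconnected eA C &
      forall D : {set A}, C \subset D -> D \subset S -> fconnected eA D -> D = C].

Definition fin_conn_graph (A : finType) (eA : rel A) : Prop :=
  [/\ fgraph eA, (0 < #|A|)%N & fconnected eA [set: A]].

Definition fepi (A B : finType) (eA : rel A) (eB : rel B) (f : A -> B) : Prop :=
  [/\ forall x y, eA x y -> eB (f x) (f y),
      forall b, exists a, f a = b &
      forall b1 b2, eB b1 b2 -> exists a1 a2, [/\ eA a1 a2, f a1 = b1 & f a2 = b2]].

Definition fconfluent (A B : finType) (eA : rel A) (eB : rel B) (f : A -> B)
  : Prop :=
  fepi eA eB f /\
  forall Q : {set B}, fconnected eB Q ->
    forall C : {set A}, fcomponent eA (f @^-1: Q) C -> f @: C = Q.

Definition clopen_basis (T : topologicalType) : Prop :=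
  forall (x : T) (U : set T), nbhs x U ->
    exists V : set T, [/\ open V, closed V, V x & V `<=` U].

Definition top_graph (T : topologicalType) (E : set (T * T)) : Prop :=
  [/\ compact [set: T], second_countable (T := T), clopen_basis T, closed E &
      (forall x, E (x, x)) /\ (forall x y, E (x, y) -> E (y, x))].

Definition tconnected (T : topologicalType) (E : set (T * T)) (S : set T) : Prop :=
  ~ exists S1 S2 : set T,
      [/\ S1 !=set0, S2 !=set0, S1 `|` S2 = S, S1 `&` S2 = set0 &
      [/\ exists2 F1, closed F1 & S1 = S `&` F1,
          exists2 F2, closed F2 & S2 = S `&` F2 &
          forall x y, S1 x -> S2 y -> ~ E (x, y)]].

Definition tcomponent (T : topologicalType) (E : set (T * T)) (S C : set T)
  : Prop :=
  [/\ C `<=` S, tconnected E C &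
      forall D : set T, C `<=` D -> D `<=` S -> tconnected E D -> D = C].

(* continuous epimorphism from a topological graph onto a finite graph
   (the finite graph carries the discrete topology) *)
Definition tepi (T : topologicalType) (E : set (T * T)) (A : finType)
  (eA : rel A) (f : T -> A) : Prop :=
  [/\ forall a, open (f @^-1` [set a]),
      forall x y, E (x, y) -> eA (f x) (f y),
      forall a, exists x, f x = a &
      forall a1 a2, eA a1 a2 -> exists x1 x2, [/\ E (x1, x2), f x1 = a1 & f x2 = a2]].

Definition tconfluent (T : topologicalType) (E : set (T * T)) (A : finType)
  (eA : rel A) (f : T -> A) : Prop :=
  tepi E eA f /\
  forall Q : {set A}, fconnected eA Q ->
    forall C : set T, tcomponent E (f @^-1` [set a | a \in Q]) C ->
      f @` C = [set a | a \in Q].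

(* (T, E) is (the) projective Fraisse limit G of finite connected graphs with
   confluent epimorphisms, via properties (1)-(3); the metric on T is used for
   the diameter condition (3). *)
Definition is_G (R : realType) (T : pseudoMetricType R) (E : set (T * T)) : Prop :=
  [/\ top_graph E, hausdorff_space T,
   forall (A : finType) (eA : rel A), fin_conn_graph eA ->
     exists f : T -> A, tconfluent E eA f,
   forall (A B : finType) (eA : rel A) (eB : rel B) (f : T -> A) (g : B -> A),
     fin_conn_graph eA -> fin_conn_graph eB ->
     tconfluent E eA f -> fconfluent eB eA g ->
     exists h : T -> B, tconfluent E eB h /\ (forall x, f x = g (h x)) &
   forall eps : R, 0 < eps ->
     exists (A : finType) (eA : rel A) (f : T -> A),
       [/\ fin_conn_graph eA, tconfluent E eA f &
           forall x y, f x = f y -> ball x eps y]].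

Definition is_quotient_by (T Y : topologicalType) (E : set (T * T)) (q : T -> Y)
  : Prop :=
  [/\ forall y : Y, exists x, q x = y,
      forall x x', q x = q x' <-> E (x, x') &
      forall U : set Y, open U <-> open (q @^-1` U)].

Definition hereditarily_unicoherent (Y : topologicalType) : Prop :=
  forall K L : set Y,
    K !=set0 -> compact K -> connected K ->
    L !=set0 -> compact L -> connected L ->
    connected (K `&` L).

(* Let K, L be subcontinua of |G| and K', L' their preimages in G: these are
   closed (compact subsets of the Hausdorff quotient are closed) and connected in
   the graph sense, and it suffices that K' ∩ L' is graph-connected.  Suppose
   K' ∩ L' splits into nonempty closed pieces S1, S2 with no edge between them.
   By compactness there is eta > 0 such that no edge joins the eta-neighbourhoods
   of S1 and S2, and eps > 0 such that points eps-close to both K' and L' are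
   eta/2-close to K' ∩ L'.  Take a confluent f : G -> A with fibres of diameter
   < eps, let a = f K', b = f L', and mark the vertices of a ∩ b whose fibre comes
   eta/2-close to S1.  Marking is constant along edges inside a ∩ b, holds on
   f S1 and fails on f S2.  The double cover of A whose sheets are glued straight
   over edges of a and crossed over the edges of b that change marking is
   connected, and its projection is confluent, so f lifts to it.  On K' the sheet
   of the lift is constant, on L' it flips exactly with the marking: comparing a
   point of S1 with a point of S2 gives a contradiction. *)

From Pilot Require Import Defs.
From mathcomp Require Import all_boot all_order all_algebra.
From mathcomp Require Import all_classical all_reals all_analysis.
Set Implicit Arguments. Unset Strict Implicit. Unset Printing Implicit Defensive.
Import Order.TTheory GRing.Theory Num.Theory.

(** * Connectedness in finite graphs *)

Section FiniteConnected.
Variables (A : finType) (e : rel A).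

Definition eclosed (S Z : {set A}) :=
  forall x y, x \in Z -> y \in S -> e x y -> y \in Z.

Lemma fconnectedP (S : {set A}) : fconnected e S <->
  (forall Z : {set A}, Z \subset S -> Z != finset.set0 -> eclosed S Z -> S \subset Z).
Proof.
split=> [cS Z ZS Z0 clZ | closedS [S1 [S2 [S10 S20 S12 S1S2 noedge]]]].
  apply/fintype.subsetP => y yS; apply/negPn/negP => yZ; apply: cS.
  exists Z, (S :\: Z); split => //.
  - by apply/set0Pn; exists y; rewrite finset.inE yZ yS.
  - by rewrite -[RHS](setID S Z) (finset.setIidPr ZS).
  - by rewrite finset.setIDA setDIl finset.setDv finset.set0I.
  - move=> x w xZ; rewrite finset.inE => /andP[wZ wS].
    by apply: contraNN wZ => /(clZ _ _ xZ wS).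
have SS1 : S \subset S1.
  apply: closedS => //; first by rewrite -S12 finset.subsetUl.
  move=> x y xS1 yS exy; move: yS; rewrite -S12 finset.in_setU => /orP[//|yS2].
  by move: (noedge _ _ xS1 yS2); rewrite exy.
case/set0Pn: S20 => w wS2.
have wS : w \in S by rewrite -S12 finset.in_setU wS2 orbT.
have : w \in S1 :&: S2 by rewrite finset.in_setI wS2 (fintype.subsetP SS1 _ wS).
by rewrite S1S2 finset.in_set0.
Qed.

Lemma fconnected_set1 (u : A) : fconnected e [set u].
Proof.
apply/fconnectedP => Z ZS /set0Pn[z zZ] _.
move/fintype.subsetP/(_ z zZ): ZS; rewrite finset.inE => /eqP zu.
by rewrite finset.sub1set -zu.
Qed.

Lemma fconnectedT_closed (Z : {set A}) : fconnected e [set: A] ->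
  Z != finset.set0 -> (forall x y, x \in Z -> e x y -> y \in Z) -> forall x, x \in Z.
Proof.
move=> cA Z0 clZ x.
have TZ : [set: A] \subset Z by apply: (fconnectedP _).1 => // u v uZ _; exact: clZ.
exact: fintype.subsetP TZ x (finset.in_setT x).
Qed.

Hypothesis e_sym : symmetric e.

Lemma fconnected_setU1 (C : {set A}) c c' :
  fconnected e C -> c \in C -> e c c' -> fconnected e (c' |: C).
Proof.
move=> cC cC' ecc'; apply/fconnectedP => Z ZS /set0Pn[z zZ] clZ.
have clZC : eclosed C (Z :&: C).
  move=> x y; rewrite finset.in_setI => /andP[xZ _] yC exy.
  by rewrite finset.in_setI yC andbT (clZ x) // in_setU1 yC orbT.
have [ZC0 | /set0Pn[w]] := eqVneq (Z :&: C) finset.set0; last first.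
  rewrite finset.in_setI => /andP[wZ wC].
  have CZ : C \subset Z.
    apply: fintype.subset_trans (subsetIl Z C); apply: (fconnectedP C).1 => //.
    - exact: subsetIr.
    - by apply/set0Pn; exists w; rewrite finset.in_setI wZ wC.
  have c'Z : c' \in Z by apply: (clZ c); rewrite ?setU11 ?(fintype.subsetP CZ).
  by rewrite finset.subUset finset.sub1set c'Z CZ.
have zC : z \notin C.
  by apply: contra_eqN ZC0 => zC; apply/set0Pn; exists z; rewrite finset.in_setI zZ zC.
have /eqP zc' : z == c' by move/fintype.subsetP/(_ z zZ): ZS; rewrite in_setU1 (negbTE zC) orbF.
have cZ : c \in Z by apply: (clZ c'); rewrite -?zc' // ?in_setU1 ?cC' ?orbT // e_sym zc'.
have : c \in Z :&: C by rewrite finset.in_setI cZ cC'.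
by rewrite ZC0 finset.in_set0.
Qed.

End FiniteConnected.

(** * A double cover of a finite graph *)

Section DoubleCover.
Variables (A : finType) (eA : rel A) (a b M : {set A}).

Definition twist (x y : A) : bool :=
  if (x \in a) && (y \in a) then false
  else [&& x \in b, y \in b & (x \in M) (+) (y \in M)].

Definition cover_rel : rel (A * bool) :=
  fun u v => eA u.1 v.1 && (v.2 == u.2 (+) twist u.1 v.1).

Lemma twistC x y : twist x y = twist y x.
Proof. by rewrite /twist [(y \in a) && _]andbC addbC andbCA. Qed.

Lemma twistxx x : twist x x = false.
Proof. by rewrite /twist addbb !andbF if_same. Qed.

Lemma twist_in_a x y : x \in a -> y \in a -> twist x y = false.
Proof. by rewrite /twist => -> ->. Qed.

Lemma cover_relE u y : eA u.1 y -> cover_rel u (y, u.2 (+) twist u.1 y).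
Proof. by move=> exy; rewrite /cover_rel /= exy eqxx. Qed.

Hypothesis gA : Defs.fgraph eA.

Lemma cover_graph : Defs.fgraph cover_rel.
Proof.
case: gA => eA_refl eA_sym; split=> [[x i] | [x i] [y j]].
  by rewrite /cover_rel /= eA_refl twistxx addbF eqxx.
rewrite /cover_rel /= eA_sym twistC; congr (_ && _).
by case: i; case: j; case: (twist y x).
Qed.

Lemma cover_fst_confluent : fconfluent cover_rel eA fst.
Proof.
have [eA_refl _] := gA; split.
  split=> [u v /andP[] // | x | x y exy]; first by exists (x, false).
  by exists (x, false), (y, false (+) twist x y); rewrite cover_relE.
move=> Q cQ C [CQ cC maxC].
have [C0 | [c cC']] := set_0Vmem C.
  rewrite C0 imset0; apply/setP => x; rewrite finset.in_set0; apply/esym/negP => xQ.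
  have : [set (x, false)] = C.
    apply: (maxC _ _ _ (@fconnected_set1 _ cover_rel (x, false))).
      by rewrite C0 finset.sub0set.
    by rewrite finset.sub1set finset.inE.
  by move/setP/(_ (x, false)); rewrite C0 finset.in_set0 set11.
have CQ' : fst @: C \subset Q.
  apply/fintype.subsetP => _ /imsetP[u uC ->].
  by move/fintype.subsetP/(_ u uC): CQ; rewrite finset.inE.
apply/eqP; rewrite finset.eqEsubset CQ' /=.
apply: (fconnectedP _ _).1 cQ _ CQ' _ _; first by apply/set0Pn; exists c.1; apply: imset_f.
move=> _ y /imsetP[u uC ->] yQ /cover_relE eud.
have dC : (y, u.2 (+) twist u.1 y) |: C \subset fst @^-1: Q.
  by rewrite finset.subUset finset.sub1set finset.inE yQ CQ.
have := maxC _ (finset.subsetUr _ _) dC (fconnected_setU1 cover_graph.2 cC uC eud).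
by move=> <-; apply/imsetP; exists (y, u.2 (+) twist u.1 y); rewrite ?setU11.
Qed.

Hypothesis M_edge : forall x y, x \in a -> y \in a -> x \in b -> y \in b -> eA x y ->
  (x \in M) = (y \in M).

Lemma twist_in_b x y : x \in b -> y \in b -> eA x y -> twist x y = (x \in M) (+) (y \in M).
Proof.
rewrite /twist => xb yb exy; rewrite xb yb /=; case: ifP => // /andP[xa ya].
by rewrite (M_edge xa ya xb yb exy) addbb.
Qed.

Lemma cover_section_lift (P : {set A * bool}) (S : {set A}) (s : A -> bool) x0 :
  eclosed cover_rel [set: A * bool] P -> fconnected eA S ->
  (forall x y, x \in S -> y \in S -> eA x y -> s y = s x (+) twist x y) ->
  x0 \in S -> (x0, s x0) \in P -> forall x, x \in S -> (x, s x) \in P.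
Proof.
move=> clP cS s_twist x0S Px0 x xS.
pose Z := [set y in S | (y, s y) \in P].
have SZ : S \subset Z.
  apply: (fconnectedP _ _).1 cS _ _ _ _.
  - by apply/fintype.subsetP => y; rewrite finset.inE => /andP[].
  - by apply/set0Pn; exists x0; rewrite finset.inE x0S.
  move=> y z; rewrite finset.inE => /andP[yS Py] zS /[dup] eyz /(@cover_relE (y, s y)) /=.
  by rewrite -(s_twist _ _ yS zS eyz) finset.inE zS => /(clP _ _ Py); apply; rewrite finset.in_setT.
by move/fintype.subsetP/(_ x xS): SZ; rewrite finset.inE => /andP[].
Qed.

Variables (p0 r0 : A).
Hypotheses (cA : fconnected eA [set: A]) (ca : fconnected eA a) (cb : fconnected eA b).
Hypotheses (p0a : p0 \in a) (p0b : p0 \in b) (r0a : r0 \in a) (r0b : r0 \in b).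
Hypotheses (p0M : p0 \in M) (r0M : r0 \notin M).

Lemma cover_connected : fconnected cover_rel [set: A * bool].
Proof.
apply/fconnectedP => P _ /set0Pn[u0 Pu0] clP.
have step x y j : eA x y -> (x, j) \in P -> (y, j (+) twist x y) \in P.
  by move=> /(@cover_relE (x, j)) exy Pxj; apply: clP exy; rewrite ?finset.in_setT.
have [i Pp0i] : exists i, (p0, i) \in P.
  pose Z := [set x | [exists j, (x, j) \in P]].
  suff : p0 \in Z by rewrite finset.inE => /fintype.existsP.
  apply: fconnectedT_closed cA _ _ _.
    apply/set0Pn; exists u0.1; rewrite finset.inE; apply/fintype.existsP.
    by exists u0.2; case: u0 Pu0.
  move=> x y; rewrite !finset.inE => /fintype.existsP[j Pxj] exy.
  by apply/fintype.existsP; exists (j (+) twist x y); apply: step.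
have Pr0i : (r0, i) \in P.
  apply: (@cover_section_lift P a (fun=> i) p0) => // x y xa ya _.
  by rewrite twist_in_a ?addbF.
(* Going from [p0] to [r0] inside [a] and back inside [b] switches sheets. *)
have Pp0ni : (p0, ~~ i) \in P.
  have s_twist x y : x \in b -> y \in b -> eA x y ->
      i (+) (y \in M) = i (+) (x \in M) (+) twist x y.
    move=> xb yb exy; rewrite twist_in_b //.
    by case: (i); case: (x \in M); case: (y \in M).
  have := cover_section_lift (s := fun x => i (+) (x \in M)) clP cb s_twist r0b.
  rewrite (negbTE r0M) addbF => /(_ Pr0i p0 p0b).
  by rewrite p0M addbT.
have PT x : ((x, false) \in P) && ((x, true) \in P).
  pose Z := [set x | ((x, false) \in P) && ((x, true) \in P)].
  suff : x \in Z by rewrite finset.inE.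
  apply: fconnectedT_closed cA _ _ _.
    by apply/set0Pn; exists p0; rewrite finset.inE; case: (i) Pp0i Pp0ni => -> ->.
  move=> x' y; rewrite !finset.inE => /andP[Px'f Px't] exy.
  by move: (step _ _ _ exy Px'f) (step _ _ _ exy Px't); case: (twist x' y) => -> ->.
by apply/fintype.subsetP => -[x []] _; case/andP: (PT x).
Qed.

End DoubleCover.

Local Open Scope classical_set_scope.
Local Open Scope ring_scope.

Definition fimage (A : finType) (T : Type) (f : T -> A) (K : set T) : {set A} :=
  [set v | `[< exists2 k, K k & f k = v >]].

Lemma fimageP (A : finType) (T : Type) (f : T -> A) (K : set T) v :
  reflect (exists2 k, K k & f k = v) (v \in fimage f K).
Proof. by rewrite finset.inE; apply: (iffP (asboolP _)). Qed.

Lemma fimage_f (A : finType) (T : Type) (f : T -> A) (K : set T) x :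
  K x -> f x \in fimage f K.
Proof. by move=> Kx; apply/fimageP; exists x. Qed.

Section TopologicalGraph.
Variables (T : topologicalType) (E : set (T * T)) (A : finType) (eA : rel A).

Lemma tepi_closed_preimage (f : T -> A) (P : set A) :
  tepi E eA f -> closed (f @^-1` P).
Proof.
case=> f_open _ _ _; rewrite -openC openE => x nPfx.
apply: filterS (open_nbhs_nbhs (conj (f_open (f x)) (erefl (f x)))) => y /= fyx.
by rewrite /= fyx.
Qed.

Lemma tconnected_tepi_const (f : T -> A) (g : A -> bool) (K : set T) :
  tepi E eA f -> tconnected E K ->
  (forall x y, K x -> K y -> E (x, y) -> g (f x) = g (f y)) ->
  forall x y, K x -> K y -> g (f x) = g (f y).
Proof.
move=> f_epi cK g_edge x y Kx Ky; apply: contrapT => gxy; apply: cK.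
pose side bb := f @^-1` [set v | g v = bb].
exists (K `&` side (g (f x))), (K `&` side (~~ g (f x))); split.
- by exists x.
- by exists y; split=> //; rewrite /side /=; case: (g (f x)) (g (f y)) gxy => -[].
- apply/seteqP; split=> [z [[]|[]] // | z Kz]; rewrite /side /=.
  by case: (g (f z)); case: (g (f x)); [left|right|right|left].
- apply/seteqP; split=> // z [[_ gz] [_]]; rewrite /side /= in gz *.
  by rewrite gz; case: (g (f x)).
have side_closed bb : closed (side bb) by exact: tepi_closed_preimage.
split; [exists (side (g (f x))) | exists (side (~~ g (f x))) |] => //.
move=> x' y' [Kx' /= gx'] [Ky' /= gy'] /(g_edge _ _ Kx' Ky').
by rewrite gx' gy'; case: (g (f x)).
Qed.

Lemma tconnected_fimage (f : T -> A) (K : set T) : symmetric eA ->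
  tepi E eA f -> tconnected E K -> fconnected eA (fimage f K).
Proof.
move=> eA_sym f_epi cK; apply/fconnectedP => Z ZK /set0Pn[v Zv] clZ.
have [_ f_edge _ _] := f_epi.
have Z_edge x y : K x -> K y -> E (x, y) -> (f x \in Z) = (f y \in Z).
  move=> Kx Ky /f_edge exy; apply/idP/idP => [/clZ | /clZ]; apply; rewrite ?fimage_f //.
  by rewrite eA_sym.
have [k Kk fkv] := fimageP _ _ _ (fintype.subsetP ZK v Zv).
apply/fintype.subsetP => _ /fimageP[x Kx <-].
by rewrite (tconnected_tepi_const (g := fun w => w \in Z) f_epi cK Z_edge Kx Kk) fkv.
Qed.

End TopologicalGraph.

Section CoverLift.
Variables (T : topologicalType) (E : set (T * T)).
Variables (A : finType) (eA : rel A) (a b M : {set A}).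
Hypothesis M_edge : forall x y, x \in a -> y \in a -> x \in b -> y \in b -> eA x y ->
  (x \in M) = (y \in M).

Lemma cover_lift_mem_eq (h : T -> A * bool) (K L : set T) (p r : T) :
  tepi E (cover_rel eA a b M) h -> tconnected E K -> tconnected E L ->
  (forall x, K x -> (h x).1 \in a) -> (forall x, L x -> (h x).1 \in b) ->
  K p -> L p -> K r -> L r -> ((h p).1 \in M) = ((h r).1 \in M).
Proof.
move=> h_epi cK cL hKa hLb Kp Lp Kr Lr; have [_ h_edge _ _] := h_epi.
have sheetK : (h p).2 = (h r).2.
  apply: (tconnected_tepi_const (g := snd) h_epi cK) Kp Kr => x y Kx Ky.
  by move/h_edge/andP => [_ /eqP ->]; rewrite twist_in_a ?hKa ?addbF.
have sheetL : (h p).2 (+) ((h p).1 \in M) = (h r).2 (+) ((h r).1 \in M).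
  apply: (tconnected_tepi_const (g := fun u => u.2 (+) (u.1 \in M)) h_epi cL) Lp Lr.
  move=> x y Lx Ly /h_edge/andP[exy /eqP ->].
  by rewrite (twist_in_b M_edge) ?hLb // -!addbA addbb addbF.
by move: sheetL; rewrite sheetK => /addbI.
Qed.

End CoverLift.

(** * Uniform estimates in compact pseudometric spaces *)

Section PseudoMetric.
Variables (R : realType) (T : pseudoMetricType R).

Lemma exists_pos_near0 (P : R -> Prop) :
  (\forall e \near 0^'+, P e) -> exists2 e, 0 < e & P e.
Proof. by move=> /(filterI (nbhs_right_gt 0))/filter_ex[e []]; exists e. Qed.

Lemma ball_half_nbhs (x : T) (r : R) : 0 < r ->
  \forall y \near x & e \near 0^'+, forall z, ball y e z -> ball x r z.
Proof.
move=> r0; exists (ball x (r / 2), [set e | e < r / 2]).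
  by split; [apply: nbhsx_ballx | apply: nbhs_right_lt]; rewrite divr_gt0.
by move=> [y e] /= [bxy er] z byz; apply: ball_split bxy (le_ball (ltW er) byz).
Qed.

Lemma compact_separated_ball (E : set (T * T)) (S1 S2 : set T) :
  closed E -> compact S1 -> compact S2 ->
  (forall x y, S1 x -> S2 y -> ~ E (x, y)) ->
  \forall eta \near 0^'+, forall s1 s2 x y, S1 s1 -> S2 s2 ->
     ball s1 eta x -> ball s2 eta y -> ~ E (x, y).
Proof.
move=> cE cS1 cS2 sep.
have : \forall eta \near 0^'+, S1 `*` S2 `<=` (fun st : T * T =>
    forall x y, ball st.1 eta x -> ball st.2 eta y -> ~ E (x, y)).
  apply: (iffLR (compact_near_coveringP _) (compact_setX cS1 cS2)).
  move=> [s1 s2] [/= S1s1 S2s2].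
  have /nbhs_ballP[r r0 rE] : nbhs (s1, s2) (~` E).
    by apply: open_nbhs_nbhs; split; [rewrite openC | exact: sep].
  have [[U1 U2] /= [U1s1 U2s2] U12] := ball_half_nbhs s1 r0.
  have [[V1 V2] /= [V1s2 V2s2] V12] := ball_half_nbhs s2 r0.
  exists ((U1 `*` V1), (U2 `&` V2)); first by split; [exists (U1, V1) | apply: filterI].
  move=> [[t1 t2] e] /= [[U1t1 V1t2] [U2e V2e]] x y bx bY.
  by apply: (rE (x, y)); split; [apply: (U12 (t1, e)) | apply: (V12 (t2, e))].
by apply: filterS => eta H s1 s2 x y S1s1 S2s2; apply: (H (s1, s2)).
Qed.

Lemma compact_ball_near_setI (K L : set T) (eta : R) :
  compact K -> closed L -> 0 < eta ->
  \forall eps \near 0^'+, forall k l z, K k -> L l -> ball k eps l -> ball k eps z ->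
     exists2 s, (K `&` L) s & ball s eta z.
Proof.
move=> cK cL eta0.
have : \forall eps \near 0^'+, K `<=` (fun k => forall l z, L l ->
    ball k eps l -> ball k eps z -> exists2 s, (K `&` L) s & ball s eta z).
  apply: (iffLR (compact_near_coveringP _) cK) => t Kt.
  have [Lt | nLt] := pselect (L t).
    by apply: filterS (ball_half_nbhs t eta0) => -[k e] /= bz l z _ _ /bz; exists t.
  have /nbhs_ballP[r r0 rL] : nbhs t (~` L).
    by apply: open_nbhs_nbhs; split; [rewrite openC | exact: nLt].
  by apply: filterS (ball_half_nbhs t r0) => -[k e] /= bl l z Ll /bl /rL.
by apply: filterS => eps H k l z Kk; apply: H.
Qed.

End PseudoMetric.

Section Marking.
Variables (R : realType) (T : pseudoMetricType R) (E : set (T * T)).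
Variables (K L S1 S2 : set T) (eta eps : R).
Variables (A : finType) (eA : rel A) (f : T -> A).
Hypotheses (eta_gt0 : 0 < eta) (eps_le : eps <= eta / 2).
Hypothesis E_refl : forall x, E (x, x).
Hypothesis S12_sep : forall s1 s2 x y, S1 s1 -> S2 s2 ->
  ball s1 eta x -> ball s2 eta y -> ~ E (x, y).
Hypothesis KL_near : forall k l z, K k -> L l -> ball k eps l -> ball k eps z ->
  exists2 s, (K `&` L) s & ball s (eta / 2) z.
Hypothesis KL_S12 : K `&` L `<=` S1 `|` S2.
Hypothesis f_epi : tepi E eA f.
Hypothesis f_mesh : forall x y, f x = f y -> ball x eps y.

(* The radius [eta / 2] leaves room for one fibre of [f], since [eps <= eta / 2]. *)
Definition marked : {set A} :=
  [set v in fimage f K :&: fimage f L |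
    `[< exists2 z, f z = v & exists2 s, S1 s & ball s (eta / 2) z >]].

Lemma marked_edge v w : v \in marked -> w \in fimage f K -> w \in fimage f L ->
  eA v w -> w \in marked.
Proof.
have [_ _ _ f_edge] := f_epi.
rewrite finset.inE => /andP[_ /asboolP[z fzv [s S1s bsz]]] wK wL.
move=> /f_edge[x [y [Exy fxv fyw]]].
have [k Kk fkw] := fimageP _ _ _ wK; have [l Ll flw] := fimageP _ _ _ wL.
have [s' KLs' bs'y] : exists2 s', (K `&` L) s' & ball s' (eta / 2) y.
  by apply: (KL_near Kk Ll); apply: f_mesh; rewrite ?fkw ?flw ?fyw.
rewrite finset.inE finset.in_setI wK wL; apply/asboolP; exists y => //.
case: (KL_S12 KLs') => [S1s' | S2s']; first by exists s'.
exfalso; apply: (S12_sep S1s S2s' _ _ Exy).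
  by apply: ball_split bsz (le_ball eps_le (f_mesh _)); rewrite fzv fxv.
by apply: le_ball bs'y; rewrite ler_pdivrMr // ler_pMr // ler1n.
Qed.

Lemma marked_edge_eq : symmetric eA -> forall v w,
  v \in fimage f K -> w \in fimage f K -> v \in fimage f L -> w \in fimage f L ->
  eA v w -> (v \in marked) = (w \in marked).
Proof.
move=> eA_sym v w vK wK vL wL evw.
by apply/idP/idP => /marked_edge; apply=> //; rewrite eA_sym.
Qed.

Lemma S1_marked p : K p -> L p -> S1 p -> f p \in marked.
Proof.
move=> Kp Lp S1p; rewrite finset.inE finset.in_setI !fimage_f //=.
by apply/asboolP; exists p => //; exists p => //; apply: ballxx; rewrite divr_gt0.
Qed.

Lemma S2_unmarked r : S2 r -> f r \notin marked.
Proof.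
move=> S2r; rewrite finset.inE; apply/negP => /andP[_ /asboolP[z fzr [s S1s bsz]]].
apply: (S12_sep S1s S2r _ (ballxx _ eta_gt0) (E_refl r)).
exact: ball_split bsz (le_ball eps_le (f_mesh fzr)).
Qed.

Hypotheses (A_fcg : fin_conn_graph eA) (tK : tconnected E K) (tL : tconnected E L).
Variables (p r : T).
Hypotheses (KLp : (K `&` L) p) (S1p : S1 p) (KLr : (K `&` L) r) (S2r : S2 r).

Lemma marked_cover_fin_conn_graph :
  fin_conn_graph (cover_rel eA (fimage f K) (fimage f L) marked).
Proof.
have [[A_refl A_sym] A_nonempty A_conn] := A_fcg.
have [[Kp Lp] [Kr Lr]] := (KLp, KLr).
split; [exact: cover_graph | by rewrite card_prod muln_gt0 A_nonempty card_bool |].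
exact: (cover_connected (marked_edge_eq A_sym) A_conn
  (tconnected_fimage A_sym f_epi tK) (tconnected_fimage A_sym f_epi tL)
  (fimage_f f Kp) (fimage_f f Lp) (fimage_f f Kr) (fimage_f f Lr)
  (S1_marked Kp Lp S1p) (S2_unmarked S2r)).
Qed.

Hypothesis f_lift : forall (B : finType) (eB : rel B) (g : B -> A),
  fin_conn_graph eB -> fconfluent eB eA g ->
  exists2 h : T -> B, tepi E eB h & forall x, f x = g (h x).

Lemma marked_cover_contra : False.
Proof.
have [[A_refl A_sym] _ _] := A_fcg.
have [h h_epi fh] := f_lift marked_cover_fin_conn_graph
  (cover_fst_confluent _ _ _ (conj A_refl A_sym)).
have hK x : K x -> (h x).1 \in fimage f K by rewrite -fh; exact: fimage_f.
have hL x : L x -> (h x).1 \in fimage f L by rewrite -fh; exact: fimage_f.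
have := cover_lift_mem_eq (marked_edge_eq A_sym) h_epi tK tL hK hL
  KLp.1 KLp.2 KLr.1 KLr.2.
by rewrite -!fh S1_marked ?(negbTE (S2_unmarked S2r)) //; case: KLp.
Qed.

End Marking.

Lemma G_tconnectedI (R : realType) (T : pseudoMetricType R) (E : set (T * T))
    (K L : set T) :
  is_G E -> closed K -> closed L -> tconnected E K -> tconnected E L ->
  tconnected E (K `&` L).
Proof.
move=> [[cT _ _ cE [E_refl _]] _ _ G_lift G_mesh] cK cL tK tL.
move=> [S1 [S2 [[p S1p] [r S2r] S12 _ [[F1 cF1 S1F1] [F2 cF2 S2F2] S12_noedge]]]].
have closed_compact (F : set T) : closed F -> compact F.
  by move=> cF; exact: subclosed_compact cF cT (subsetT F).
have cS1 : compact S1 by rewrite S1F1; apply: closed_compact; do !apply: closedI.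
have cS2 : compact S2 by rewrite S2F2; apply: closed_compact; do !apply: closedI.
have [eta eta_gt0 S12_sep] :=
  exists_pos_near0 (compact_separated_ball cE cS1 cS2 S12_noedge).
have eta2_gt0 : 0 < eta / 2 by rewrite divr_gt0.
have [eps eps_gt0 [/ltW eps_le KL_near]] := exists_pos_near0 (filterI
  (nbhs_right_lt eta2_gt0) (compact_ball_near_setI (closed_compact _ cK) cL eta2_gt0)).
have KL_S12 : K `&` L `<=` S1 `|` S2 by rewrite S12.
have [KLp KLr] : (K `&` L) p /\ (K `&` L) r by rewrite -S12; split; [left | right].
have [A [eA [f [A_fcg f_conf f_mesh]]]] := G_mesh eps eps_gt0.
apply: (marked_cover_contra eta_gt0 eps_le E_refl S12_sep KL_near KL_S12 f_conf.1
  f_mesh A_fcg tK tL KLp S1p KLr S2r) => B eB g B_fcg g_conf.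
have [h [h_conf fh]] := G_lift _ _ _ _ f g A_fcg B_fcg f_conf g_conf.
by exists h; [exact: h_conf.1 |].
Qed.

(** * The quotient |G| *)

Section Quotient.
Variables (R : realType) (T : pseudoMetricType R) (E : set (T * T)).
Variables (Y : topologicalType) (q : T -> Y).
Hypotheses (cT : compact [set: T]) (cE : closed E).
Hypothesis q_surj : forall y, exists x, q x = y.
Hypothesis qE : forall x x', q x = q x' <-> E (x, x').
Hypothesis q_open : forall U : set Y, open U <-> open (q @^-1` U).

Lemma quotient_closed (C : set Y) : closed C <-> closed (q @^-1` C).
Proof. by rewrite -!openC; exact: (q_open (~` C)). Qed.

Lemma compact_saturation_closed (C : set T) : compact C -> closed (q @^-1` (q @` C)).
Proof.
move=> cC; rewrite -openC openE => y0 /= nCy0.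
have : \forall y \near y0, C `<=` (fun x => ~ E (x, y)).
  apply: (iffLR (compact_near_coveringP _) cC) => x Cx.
  have : nbhs (x, y0) (~` E).
    apply: open_nbhs_nbhs; split; first by rewrite openC.
    by move=> /qE qxy0; apply: nCy0; exists x.
  by apply: filterS => -[].
by apply: filterS => y nEy [x Cx /qE]; exact: nEy.
Qed.

Lemma quotient_hausdorff : hausdorff_space Y.
Proof.
rewrite open_hausdorff => y1 y2; have [x1 <-] := q_surj y1; have [x2 <-] := q_surj y2.
move=> /eqP q12.
have closed_compact (C : set T) : closed C -> compact C.
  by move=> cC; exact: subclosed_compact cC cT (subsetT C).
pose F x := q @^-1` (q @` [set x]).
have cF x : compact (F x).
  exact/closed_compact/compact_saturation_closed/compact_set1.
have F12 s t : F x1 s -> F x2 t -> ~ E (s, t).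
  by move=> [_ -> qs] [_ -> qt] /qE; rewrite -qs -qt.
have [eta eta_gt0 F12_sep] :=
  exists_pos_near0 (compact_separated_ball cE (cF x1) (cF x2) F12).
pose U x := interior [set z | exists2 s, F x s & ball s eta z].
(* The preimage of [V x] is the largest saturated subset of [U x]; it is open
   because saturations of compact sets are closed. *)
pose V x := ~` (q @` ~` U x).
have V_open x : open (V x).
  apply/q_open; rewrite -preimage_setC openC.
  exact/compact_saturation_closed/closed_compact/open_closedC/open_interior.
have V_q x : V x (q x).
  move=> [z nUz qzx]; apply: nUz; rewrite /U /interior /=.
  apply: (filterS _ (nbhsx_ballx z eta eta_gt0)) => w bzw.
  by exists z => //; exists x.
have V_U x z : V x (q z) -> U x z.
  by move=> Vz; apply: contrapT => nUz; apply: Vz; exists z.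
exists (V x1, V x2); first by split; rewrite inE; exact: V_q.
split; [exact: V_open | exact: V_open |].
apply/eqP/seteqP; split=> // y [V1y V2y]; have [z qzy] := q_surj y.
rewrite -qzy in V1y V2y.
have [s F1s bsz] := nbhs_singleton (V_U _ _ V1y).
have [t F2t btz] := nbhs_singleton (V_U _ _ V2y).
exact: (F12_sep _ _ _ _ F1s F2t bsz btz (proj1 (qE z z) erefl)).
Qed.

Lemma compact_preimage_closed (K : set Y) : compact K -> closed (q @^-1` K).
Proof.
by move=> cK; apply/quotient_closed; exact: compact_closed quotient_hausdorff cK.
Qed.

Lemma tconnected_preimage (K : set Y) :
  compact K -> connected K -> tconnected E (q @^-1` K).
Proof.
move=> cK connK [S1 [S2 [[x1 S1x1] [x2 S2x2] S12 _ [[F1 cF1 S1F1] [F2 cF2 S2F2] noedge]]]].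
have qS12 x y : S1 x -> S2 y -> q x <> q y by move=> S1x S2y /qE; exact: noedge.
have saturated (S S' : set T) : S `|` S' = q @^-1` K ->
    (forall x y, S x -> S' y -> q x <> q y) -> q @^-1` (q @` S) = S.
  move=> SS' qSS'; apply/seteqP; split=> [x [s Ss qsx] | x Sx]; last by exists x.
  have Ks : (q @^-1` K) s by rewrite -SS'; left.
  have : (q @^-1` K) x by rewrite /= -qsx.
  by rewrite -SS' => -[// | S'x]; have := qSS' _ _ Ss S'x.
have closed_image (S F : set T) : closed F -> S = q @^-1` K `&` F ->
    q @^-1` (q @` S) = S -> closed (q @` S).
  move=> cF SF Ssat; apply/quotient_closed; rewrite Ssat SF.
  by apply: closedI cF; exact: compact_preimage_closed.
have cqS1 : closed (q @` S1).
  exact: closed_image cF1 S1F1 (saturated _ _ S12 qS12).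
have cqS2 : closed (q @` S2).
  apply: closed_image cF2 S2F2 (saturated _ S1 _ _); first by rewrite setUC.
  by move=> x y S2x S1y /esym; apply: qS12.
have K_split : K = q @` S1 `|` q @` S2.
  rewrite -image_setU S12 image_preimage //.
  by apply/seteqP; split=> // y _; have [x <-] := q_surj y; exists x.
have qS1_K : q @` S1 = K.
  apply: connK; first by exists (q x1); exists x1.
    exists (~` (q @` S2)); first by rewrite openC.
    apply/seteqP; split=> [_ [s S1s <-] | y [Ky nS2y]].
      split; first by rewrite K_split; left; exists s.
      by move=> [t S2t /esym]; apply: qS12.
    by move: Ky; rewrite K_split => -[].
  exists (q @` S1) => //; rewrite setIidr // K_split; exact: subsetUl.
have : (q @` S1) (q x2) by rewrite qS1_K K_split; right; exists x2.
by move=> [s S1s]; apply: qS12.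
Qed.

Lemma tconnected_preimage_connected (B : set Y) :
  tconnected E (q @^-1` B) -> connected B.
Proof.
move=> tB C [y Cy] [U oU CBU] [F cF CBF]; apply: contrapT => CB; apply: tB.
have CsubB : C `<=` B by rewrite CBU; exact: subIsetl.
have [y' [By' nCy']] : exists y', B y' /\ ~ C y'.
  apply: contrapT => nBC; apply: CB; apply/seteqP; split=> // z Bz.
  by apply: contrapT => nCz; apply: nBC; exists z.
exists (q @^-1` C), (q @^-1` (B `\` C)); split.
- by have [x qxy] := q_surj y; exists x; rewrite /= qxy.
- by have [x qxy] := q_surj y'; exists x; rewrite /= qxy.
- by rewrite -preimage_setU setDUK.
- by rewrite -preimage_setI setDIK preimage_set0.
split.
- by exists (q @^-1` F); [apply/quotient_closed | rewrite -preimage_setI -CBF].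
- exists (q @^-1` ~` U); first by apply/quotient_closed; rewrite closedC.
  by rewrite -preimage_setI CBU setDIr setDv set0U setDE.
- by move=> x x' Cx [_ nCx'] /qE qxx'; apply: nCx'; rewrite /= -qxx'.
Qed.

End Quotient.

Theorem mainTheorem15 (R : realType) (T : pseudoMetricType R)
  (E : set (T * T)) (Y : topologicalType) (q : T -> Y) :
  is_G E -> is_quotient_by E q -> hereditarily_unicoherent Y.
Proof.
move=> hG [q_surj qE q_open] K L _ cK connK _ cL connL.
have [[cT _ _ cE _] _ _ _ _] := hG.
apply: (tconnected_preimage_connected q_surj qE q_open).
rewrite preimage_setI; apply: G_tconnectedI => //.
- exact: (compact_preimage_closed cT cE q_surj qE q_open cK).
- exact: (compact_preimage_closed cT cE q_surj qE q_open cL).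
- exact: (tconnected_preimage cT cE q_surj qE q_open cK).
- exact: (tconnected_preimage cT cE q_surj qE q_open cL).
Qed.
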